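(* Let $d$ be a positive integer and $n$ a non-negative integer. A nonempty set $\Gamma\subseteq\mathbb{N}_0^d$ is a contractive projection set for $H^{2(n+1)}(\mathbb{T}^d)$ if and only if $E_n(\Gamma)=\Gamma$.
   Context: $\mathbb{T}^d$ is the $d$-dimensional torus with normalized Haar measure $m_d$; $\widehat f(\alpha)=\int_{\mathbb{T}^d} f\,\overline{z^\alpha}\,dm_d$. $\mathbb{N}_0=\{0,1,2,\dots\}$. $H^p(\mathbb{T}^d)$ is the subspace of $L^p(\mathbb{T}^d)$ of functions with $\widehat f(\alpha)=0$ for $\alpha\notin\mathbb{N}_0^d$. For $\Gamma\subseteq\mathbb{N}_0^d$, $P_\Gamma$ is densely defined by $P_\Gamma f(z)=\sum_{\alpha\in\Gamma}\widehat f(\alpha)z^\alpha$, and $\Gamma$ is a contractive projection set for $H^p(\mathbb{T}^d)$ if $P_\Gamma$ extends to a contraction on $H^p(\mathbb{T}^d)$. For nonempty $\Gamma\subseteq\mathbb{N}_0^d$, $\Lambda(\Gamma)$ denotes the coset in $\mathbb{Z}^d$ generated by $\Gamma$ (the smallest coset of a subgroup of $\mathbb{Z}^d$ containing $\Gamma$); every $\lambda\in\Lambda(\Gamma)$ can be written as $\lambda=\gamma+\sum_{\alpha\in\Gamma,\alpha\neq\gamma}m_{\gamma,\alpha}(\alpha-\gamma)$ with $\gamma\in\Gamma$ and integers $m_{\gamma,\alpha}$, finitely many nonzero. The distance $d(\Gamma,\lambda)$ is the infimum, over all such representations (any $\gamma\in\Gamma$), of $\max\big(\sum_{m_{\gamma,\alpha}>0}m_{\gamma,\alpha},\,-\sum_{m_{\gamma,\alpha}<0}m_{\gamma,\alpha}\big)$.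 The $n$-extension of $\Gamma$ is $E_n(\Gamma)=\{\lambda\in\Lambda(\Gamma)\cap\mathbb{N}_0^d: d(\Gamma,\lambda)\leq n\}$. *)

From Stdlib Require Import Reals ZArith List Lia Lra ClassicalEpsilon.
From Coquelicot Require Import Coquelicot.
Open Scope R_scope.

(** Multi-indices: integer vectors, encoded as functions nat -> Z;
    a point of Z^d is such a function vanishing at every index >= d. *)
Definition mindex := nat -> Z.

Definition in_Zd (d : nat) (a : mindex) : Prop :=
  forall i, (d <= i)%nat -> a i = 0%Z.

Definition in_N0d (d : nat) (a : mindex) : Prop :=
  in_Zd d a /\ (forall i, (i < d)%nat -> (0 <= a i)%Z).

(** Points of T^d are parametrised by t ∈ [0,1)^d (t : nat -> R, only the
    first d coordinates matter), z_j = exp(2 π i t_j).  z^α : *)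
Fixpoint dot (d : nat) (a : mindex) (t : nat -> R) : R :=
  match d with
  | O => 0
  | S d' => dot d' a t + IZR (a d') * t d'
  end.

Definition monomial (d : nat) (a : mindex) (t : nat -> R) : C :=
  (cos (2 * PI * dot d a t), sin (2 * PI * dot d a t)).

Definition tpoly := list (mindex * C).

Definition analytic_poly (d : nat) (f : tpoly) : Prop :=
  List.Forall (fun p => in_N0d d (fst p)) f.

Definition tpoly_eval (d : nat) (f : tpoly) (t : nat -> R) : C :=
  fold_right (fun p acc => Cplus (Cmult (snd p) (monomial d (fst p) t)) acc) (RtoC 0) f.

Definition P_Gamma (Gamma : mindex -> Prop) (f : tpoly) : tpoly :=
  filter (fun p => if excluded_middle_informative (Gamma (fst p)) then true else false) f.

(** Integral over T^d against normalised Haar measure m_d, as an iterated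
    integral over [0,1]^d (coordinate 0 outermost). *)
Definition cons_pt (s : R) (t : nat -> R) : nat -> R :=
  fun i => match i with O => s | S j => t j end.

Fixpoint torus_int (d : nat) (g : (nat -> R) -> R) : R :=
  match d with
  | O => g (fun _ => 0)
  | S d' => RInt (fun s => torus_int d' (fun t => g (cons_pt s t))) 0 1
  end.

Definition Lp_norm (d p : nat) (f : tpoly) : R :=
  let I := torus_int d (fun t => Cmod (tpoly_eval d f t) ^ p) in
  if Req_EM_T I 0 then 0 else Rpower I (/ INR p).

(** Γ is a contractive projection set for H^p(T^d): P_Γ, densely defined on the
    analytic polynomials, is contractive there (equivalently extends to a
    contraction of H^p). *)
Definition contractive_projection_set (d p : nat) (Gamma : mindex -> Prop) : Prop :=
  forall f : tpoly, analytic_poly d f ->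
    Lp_norm d p (P_Gamma Gamma f) <= Lp_norm d p f.

Definition pos_sum (l : list (mindex * Z)) : Z :=
  fold_right (fun p acc => (Z.max (snd p) 0 + acc)%Z) 0%Z l.
Definition neg_sum (l : list (mindex * Z)) : Z :=
  fold_right (fun p acc => (Z.max (- snd p) 0 + acc)%Z) 0%Z l.

(** l (a finite list of pairs (α, m_{γ,α}), with distinct α ∈ Γ \ {γ}) together
    with γ ∈ Γ is a representation of λ:
    λ = γ + Σ m_{γ,α} (α - γ). *)
Definition is_repr (Gamma : mindex -> Prop) (lam gam : mindex)
    (l : list (mindex * Z)) : Prop :=
  Gamma gam /\
  List.Forall (fun p => Gamma (fst p) /\ fst p <> gam) l /\
  NoDup (map fst l) /\
  (forall i, lam i =
     (gam i + fold_right (fun p acc => snd p * (fst p i - gam i) + acc) 0 l)%Z).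

(** d(Γ,λ) <= k : the infimum of the (natural-number valued) costs of the
    representations of λ is at most k, i.e. some representation has cost <= k. *)
Definition dist_le (Gamma : mindex -> Prop) (lam : mindex) (k : nat) : Prop :=
  exists gam l, is_repr Gamma lam gam l /\
    (Z.max (pos_sum l) (neg_sum l) <= Z.of_nat k)%Z.

Definition in_coset (Gamma : mindex -> Prop) (lam : mindex) : Prop :=
  exists gam l, is_repr Gamma lam gam l.

Definition E_ext (d n : nat) (Gamma : mindex -> Prop) (lam : mindex) : Prop :=
  in_coset Gamma lam /\ in_N0d d lam /\ dist_le Gamma lam n.

(* For p = 2(n+1), the p-th power of the L^p norm of f is the constant Fourier coefficient of
   (f conj f)^(n+1), so every integral below reduces to bookkeeping of frequencies.

   If E_n(Γ) = Γ, split f = g + h with g = P_Γ f.  Convexity of x ↦ x^(n+1) gives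
   |g + h|^(2n+2) ≥ |g|^(2n+2) + 2(n+1) |g|^(2n) Re(conj g · h), and the frequencies of
   |g|^(2n) conj g · h are μ − γ + Σ_j (α_j − β_j) with γ, α_j, β_j ∈ Γ and μ ∈ N_0^d \ Γ.
   Such a frequency vanishes only if μ ∈ E_n(Γ), which is excluded, so the cross term integrates
   to 0 and ‖f‖ ≥ ‖P_Γ f‖.

   Conversely, if λ ∈ E_n(Γ) \ Γ, let g be the sum of z^α over the finitely many α ∈ Γ occurring
   in a representation of λ, and f = g − ε z^λ, so that P_Γ f = g.  All coefficients of
   |g|^(2n) conj g · z^λ are nonnegative and its constant one is at least 1, hence
   ‖f‖^(2n+2) ≤ ‖g‖^(2n+2) − 2(n+1) ε + O(ε²) < ‖P_Γ f‖^(2n+2) for small ε > 0. *)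

From Stdlib Require Import Reals ZArith List Lia Lra ClassicalEpsilon FunctionalExtensionality.
From Coquelicot Require Import Coquelicot.
Open Scope R_scope.

Definition zero_idx : mindex := fun _ => 0%Z.
Definition add_idx (a b : mindex) : mindex := fun i => (a i + b i)%Z.
Definition opp_idx (a : mindex) : mindex := fun i => (- a i)%Z.

Definition tmul (F G : tpoly) : tpoly :=
  flat_map (fun p => map (fun q => (add_idx (fst p) (fst q), (snd p * snd q)%C)) G) F.
Definition tconj (F : tpoly) : tpoly := map (fun p => (opp_idx (fst p), Cconj (snd p))) F.
Definition tone : tpoly := (zero_idx, RtoC 1) :: nil.
Definition tscale (c : C) (F : tpoly) : tpoly := map (fun p => (fst p, (c * snd p)%C)) F.
Fixpoint tpow (F : tpoly) (m : nat) : tpoly :=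
  match m with O => tone | S m' => tmul F (tpow F m') end.
Definition tnorm2 (F : tpoly) : tpoly := tmul F (tconj F).
Definition unit_poly (s : list mindex) : tpoly := map (fun a => (a, RtoC 1)) s.

Definition e2pi (x : R) : C := (cos (2 * PI * x), sin (2 * PI * x)).

Lemma e2pi_add x y : e2pi (x + y) = (e2pi x * e2pi y)%C.
Proof.
  unfold e2pi; rewrite Rmult_plus_distr_l, cos_plus, sin_plus.
  apply injective_projections; simpl; ring.
Qed.

Lemma e2pi_opp x : e2pi (- x) = Cconj (e2pi x).
Proof.
  unfold e2pi, Cconj; rewrite <- Ropp_mult_distr_r, cos_neg, sin_neg; reflexivity.
Qed.

Lemma e2pi_0 : e2pi 0 = RtoC 1.
Proof. unfold e2pi; rewrite Rmult_0_r, cos_0, sin_0; reflexivity. Qed.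

Lemma Cmod_e2pi x : Cmod (e2pi x) = 1.
Proof.
  unfold Cmod, e2pi; cbn [fst snd].
  replace (_ ^ 2 + _ ^ 2) with 1 by (rewrite <- (sin2_cos2 (2 * PI * x)); unfold Rsqr; ring).
  apply sqrt_1.
Qed.

Lemma dot_add_idx d a b t : dot d (add_idx a b) t = dot d a t + dot d b t.
Proof. induction d; simpl; [lra|]; rewrite IHd; unfold add_idx; rewrite plus_IZR; ring. Qed.

Lemma dot_opp_idx d a t : dot d (opp_idx a) t = - dot d a t.
Proof. induction d; simpl; [lra|]; rewrite IHd; unfold opp_idx; rewrite opp_IZR; ring. Qed.

Lemma dot_zero_idx d t : dot d zero_idx t = 0.
Proof. induction d; simpl; [lra|]; rewrite IHd; unfold zero_idx; simpl; ring. Qed.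

Lemma monomial_e2pi d a t : monomial d a t = e2pi (dot d a t).
Proof. reflexivity. Qed.

Lemma monomial_add_idx d a b t :
  monomial d (add_idx a b) t = (monomial d a t * monomial d b t)%C.
Proof. rewrite !monomial_e2pi, dot_add_idx, e2pi_add; reflexivity. Qed.

Lemma monomial_opp_idx d a t : monomial d (opp_idx a) t = Cconj (monomial d a t).
Proof. rewrite !monomial_e2pi, dot_opp_idx, e2pi_opp; reflexivity. Qed.

Lemma monomial_zero_idx d t : monomial d zero_idx t = RtoC 1.
Proof. rewrite monomial_e2pi, dot_zero_idx, e2pi_0; reflexivity. Qed.

Lemma Cmod_monomial d a t : Cmod (monomial d a t) = 1.
Proof. rewrite monomial_e2pi; apply Cmod_e2pi. Qed.

Section Evaluation.

Variables (d : nat) (t : nat -> R).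

Notation eval F := (tpoly_eval d F t).

Lemma eval_nil : eval nil = RtoC 0.
Proof. reflexivity. Qed.

Lemma eval_cons p F : eval (p :: F) = (snd p * monomial d (fst p) t + eval F)%C.
Proof. reflexivity. Qed.

Lemma eval_app F G : eval (F ++ G) = (eval F + eval G)%C.
Proof. induction F as [|p F IH]; simpl; rewrite ?eval_cons, ?IH, ?eval_nil; ring. Qed.

Lemma eval_tmul F G : eval (tmul F G) = (eval F * eval G)%C.
Proof.
  unfold tmul; induction F as [|p F IH]; cbn [flat_map]; rewrite ?eval_nil; [ring|].
  rewrite eval_app, IH, eval_cons.
  assert (Hrow : eval (map (fun q => (add_idx (fst p) (fst q), (snd p * snd q)%C)) G)
                 = (snd p * monomial d (fst p) t * eval G)%C).
  { clear IH; induction G as [|q G IHG]; cbn [map]; rewrite ?eval_nil, ?eval_cons; [ring|].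
    rewrite IHG; cbn [fst snd]; rewrite monomial_add_idx; ring. }
  rewrite Hrow; ring.
Qed.

Lemma eval_tconj F : eval (tconj F) = Cconj (eval F).
Proof.
  unfold tconj; induction F as [|p F IH]; cbn [map]; rewrite ?eval_nil, ?eval_cons.
  - apply injective_projections; simpl; ring.
  - cbn [fst snd]; rewrite IH, monomial_opp_idx, Cplus_conj, Cmult_conj; reflexivity.
Qed.

Lemma eval_tone : eval tone = RtoC 1.
Proof.
  unfold tone; rewrite eval_cons, eval_nil; cbn [fst snd]; rewrite monomial_zero_idx; ring.
Qed.

Lemma eval_tscale c F : eval (tscale c F) = (c * eval F)%C.
Proof.
  unfold tscale; induction F as [|p F IH]; cbn [map];
    rewrite ?eval_nil, ?eval_cons, ?IH; cbn [fst snd]; ring.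
Qed.

Lemma eval_tpow_tnorm2 F m : eval (tpow (tnorm2 F) m) = RtoC ((Cmod (eval F) ^ 2) ^ m).
Proof.
  induction m as [|m IH]; simpl; [apply eval_tone|].
  rewrite eval_tmul, IH; unfold tnorm2; rewrite eval_tmul, eval_tconj, <- Cmod2_conj.
  rewrite RtoC_mult; reflexivity.
Qed.

Lemma Re_eval_tpow_tnorm2 F m : Re (eval (tpow (tnorm2 F) m)) = (Cmod (eval F) ^ 2) ^ m.
Proof. rewrite eval_tpow_tnorm2; reflexivity. Qed.

Lemma eval_filter_split (P : mindex * C -> bool) F :
  eval F = (eval (filter P F) + eval (filter (fun p => negb (P p)) F))%C.
Proof.
  induction F as [|p F IH]; cbn [filter]; rewrite ?eval_nil; [ring|].
  destruct (P p); cbn [negb]; rewrite !eval_cons, IH; ring.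
Qed.

Lemma Cmod_eval_unit_poly s : Cmod (eval (unit_poly s)) <= INR (length s).
Proof.
  induction s as [|a s IH].
  - change (Cmod (RtoC 0) <= 0); rewrite Cmod_0; lra.
  - change (unit_poly (a :: s)) with ((a, RtoC 1) :: unit_poly s).
    rewrite eval_cons, length_cons, S_INR; cbn [fst snd].
    eapply Rle_trans; [apply Cmod_triangle|].
    rewrite Cmod_mult, Cmod_1, Cmod_monomial; lra.
Qed.

End Evaluation.

Definition null_idx (d : nat) (a : mindex) : Prop := forall i, (i < d)%nat -> a i = 0%Z.

Definition re_const_term (d : nat) (F : tpoly) : R :=
  fold_right (fun p acc =>
    (if excluded_middle_informative (null_idx d (fst p)) then Re (snd p) else 0) + acc) 0 F.

Lemma re_const_term_cons d p F :
  re_const_term d (p :: F) =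
  (if excluded_middle_informative (null_idx d (fst p)) then Re (snd p) else 0)
  + re_const_term d F.
Proof. reflexivity. Qed.

Definition shift_idx (a : mindex) : mindex := fun i => a (S i).

Definition tslice (s : R) (F : tpoly) : tpoly :=
  map (fun p => (shift_idx (fst p), (snd p * e2pi (IZR (fst p 0%nat) * s))%C)) F.

Lemma dot_cons_pt d a s t :
  dot (S d) a (cons_pt s t) = IZR (a 0%nat) * s + dot d (shift_idx a) t.
Proof.
  induction d as [|d IH]; [simpl; ring|].
  change (dot (S (S d)) a (cons_pt s t))
    with (dot (S d) a (cons_pt s t) + IZR (a (S d)) * t d).
  rewrite IH; simpl; unfold shift_idx; ring.
Qed.

Lemma eval_cons_pt d F s t : tpoly_eval (S d) F (cons_pt s t) = tpoly_eval d (tslice s F) t.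
Proof.
  unfold tslice; induction F as [|p F IH]; [reflexivity|].
  cbn [map]; rewrite !eval_cons, IH; cbn [fst snd].
  rewrite !monomial_e2pi, dot_cons_pt, e2pi_add; ring.
Qed.

Lemma null_idx_S d a : null_idx (S d) a <-> a 0%nat = 0%Z /\ null_idx d (shift_idx a).
Proof.
  unfold null_idx, shift_idx; split.
  - intros H; split; [apply H; lia|intros i Hi; apply H; lia].
  - intros [H0 H] [|i] Hi; [exact H0|apply H; lia].
Qed.

Lemma sin_2PI_IZR k : sin (2 * PI * IZR k) = 0.
Proof. apply sin_eq_0_1; exists (2 * k)%Z; rewrite mult_IZR; ring. Qed.

Lemma cos_2PI_IZR k : cos (2 * PI * IZR k) = 1.
Proof.
  replace (2 * PI * IZR k) with (2 * (PI * IZR k)) by ring.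
  rewrite cos_2a_sin, sin_eq_0_1 by (exists k; ring); ring.
Qed.

Lemma is_RInt_const_01 (v : R) : is_RInt (fun _ => v) 0 1 v.
Proof.
  pose proof (is_RInt_const 0 1 v) as H.
  change (scal (1 - 0) v) with ((1 - 0) * v) in H.
  rewrite Rminus_0_r, Rmult_1_l in H; exact H.
Qed.

Lemma is_RInt_Re_e2pi (k : Z) (c : C) :
  is_RInt (fun s => Re (c * e2pi (IZR k * s))) 0 1 (if Z.eq_dec k 0 then Re c else 0).
Proof.
  destruct (Z.eq_dec k 0) as [->|Hk].
  - apply is_RInt_ext with (fun _ => Re c).
    { intros s _; rewrite Rmult_0_l, e2pi_0; unfold Re; simpl; ring. }
    apply is_RInt_const_01.
  - assert (Hk' : IZR k <> 0) by now apply not_0_IZR.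
    assert (HPI : PI <> 0) by (pose proof PI_RGT_0; lra).
    set (F s := (Re c * sin (2 * PI * (IZR k * s)) + Im c * cos (2 * PI * (IZR k * s)))
                / (2 * PI * IZR k)).
    assert (HF : minus (F 1) (F 0) = 0).
    { unfold F, minus, plus, opp; simpl.
      rewrite !Rmult_0_r, Rmult_1_r, sin_0, cos_0, sin_2PI_IZR, cos_2PI_IZR.
      field; split; assumption. }
    enough (H : is_RInt (fun s => Re (c * e2pi (IZR k * s))) 0 1 (minus (F 1) (F 0)))
      by (rewrite HF in H; exact H).
    apply (is_RInt_derive F).
    + intros s _; unfold F; auto_derive; [exact I|].
      unfold e2pi, Re, Im; simpl; field; split; assumption.
    + intros s _; apply (ex_derive_continuous (V := R_CompleteNormedModule)).
      unfold e2pi; simpl; auto_derive; exact I.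
Qed.

Lemma is_RInt_re_const_term_tslice d F :
  is_RInt (fun s => re_const_term d (tslice s F)) 0 1 (re_const_term (S d) F).
Proof.
  induction F as [|[a c] F IH]; cbn [tslice map re_const_term fold_right fst snd].
  - apply is_RInt_const_01.
  - apply (is_RInt_plus (V := R_NormedModule)); [|exact IH].
    pose proof (null_idx_S d a) as HS.
    destruct (excluded_middle_informative (null_idx d (shift_idx a))) as [Ha|Ha];
      destruct (excluded_middle_informative (null_idx (S d) a)) as [HSa|HSa];
      [| |tauto|apply is_RInt_const_01];
      pose proof (is_RInt_Re_e2pi (a 0%nat) c) as H;
      destruct (Z.eq_dec (a 0%nat) 0); tauto.
Qed.

Lemma torus_int_Re_eval d F : torus_int d (fun t => Re (tpoly_eval d F t)) = re_const_term d F.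
Proof.
  revert F; induction d as [|d IH]; intros F.
  - cbn [torus_int]; induction F as [|[a c] F IHF]; [reflexivity|].
    rewrite eval_cons, re_const_term_cons; cbn [fst snd].
    destruct (excluded_middle_informative (null_idx 0 a)) as [_|Ha];
      [|exfalso; apply Ha; intros i Hi; lia].
    rewrite <- IHF, monomial_e2pi; cbn [dot]; rewrite e2pi_0; unfold Re; simpl; ring.
  - cbn [torus_int].
    rewrite <- (is_RInt_unique _ _ _ _ (is_RInt_re_const_term_tslice d F)).
    apply RInt_ext; intros s _.
    rewrite <- IH; f_equal; apply functional_extensionality; intros t.
    rewrite eval_cons_pt; reflexivity.
Qed.

(* Not a corollary of [torus_int_Re_eval]: [RInt] is monotone only on integrable functions, so
   positivity is pushed through the explicit [is_RInt] of each slice. *)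
Lemma re_const_term_ge0 d F : (forall t, 0 <= Re (tpoly_eval d F t)) -> 0 <= re_const_term d F.
Proof.
  revert F; induction d as [|d IH]; intros F HF.
  - rewrite <- torus_int_Re_eval; apply HF.
  - apply (is_RInt_ge_0 _ 0 1 _ Rle_0_1 (is_RInt_re_const_term_tslice d F)).
    intros s _; apply IH; intros t; rewrite <- eval_cons_pt; apply HF.
Qed.

Lemma re_const_term_app d F G :
  re_const_term d (F ++ G) = re_const_term d F + re_const_term d G.
Proof. induction F as [|p F IH]; simpl; [ring|rewrite IH; ring]. Qed.

Lemma re_const_term_tscale d r F : re_const_term d (tscale (RtoC r) F) = r * re_const_term d F.
Proof.
  induction F as [|[a c] F IH]; simpl; [ring|rewrite IH].
  destruct (excluded_middle_informative _); unfold Re; simpl; ring.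
Qed.

Lemma re_const_term_tone d : re_const_term d tone = 1.
Proof.
  simpl; destruct (excluded_middle_informative (null_idx d zero_idx)) as [_|H].
  - unfold Re; simpl; ring.
  - exfalso; apply H; intros i _; reflexivity.
Qed.

Lemma re_const_term_le d F G :
  (forall t, Re (tpoly_eval d F t) <= Re (tpoly_eval d G t)) ->
  re_const_term d F <= re_const_term d G.
Proof.
  intros HFG.
  enough (H : 0 <= re_const_term d (G ++ tscale (RtoC (-1)) F))
    by (rewrite re_const_term_app, re_const_term_tscale in H; lra).
  apply re_const_term_ge0; intros t.
  rewrite eval_app, eval_tscale; specialize (HFG t); unfold Re in *; simpl; lra.
Qed.

Lemma re_const_term_eq0 d F :
  (forall p, In p F -> ~ null_idx d (fst p)) -> re_const_term d F = 0.
Proof.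
  induction F as [|p F IH]; intros HF; [reflexivity|]; simpl.
  rewrite IH by (intros q Hq; apply HF; right; exact Hq).
  destruct (excluded_middle_informative _) as [H|_]; [|ring].
  exfalso; apply (HF p); [left|]; auto.
Qed.

Definition unit_coefs (F : tpoly) : Prop := forall p, In p F -> snd p = RtoC 1.

Lemma unit_coefs_cons p F : unit_coefs (p :: F) -> snd p = RtoC 1 /\ unit_coefs F.
Proof. intros H; split; [apply H; left; reflexivity|intros q Hq; apply H; right; exact Hq]. Qed.

Lemma re_const_term_ge0_unit_coefs d F : unit_coefs F -> 0 <= re_const_term d F.
Proof.
  induction F as [|p F IH]; intros HF; [simpl; lra|].
  destruct (unit_coefs_cons _ _ HF) as [Hp HF'].
  rewrite re_const_term_cons, Hp; specialize (IH HF').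
  destruct (excluded_middle_informative _); unfold Re; simpl; lra.
Qed.

Lemma re_const_term_ge1 d F :
  unit_coefs F -> (exists p, In p F /\ null_idx d (fst p)) -> 1 <= re_const_term d F.
Proof.
  intros HF [p [Hp Hnull]]; induction F as [|q F IH]; [contradiction|].
  destruct (unit_coefs_cons _ _ HF) as [Hq HF'].
  rewrite re_const_term_cons, Hq; destruct Hp as [<-|Hp].
  - pose proof (re_const_term_ge0_unit_coefs d F HF').
    destruct (excluded_middle_informative _); [unfold Re; simpl; lra|contradiction].
  - specialize (IH HF' Hp).
    destruct (excluded_middle_informative _); unfold Re; simpl; lra.
Qed.

Lemma torus_int_Cmod_pow_even d m f :
  torus_int d (fun t => Cmod (tpoly_eval d f t) ^ (2 * m)) = re_const_term d (tpow (tnorm2 f) m).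
Proof.
  rewrite <- torus_int_Re_eval; f_equal; apply functional_extensionality; intros t.
  rewrite Re_eval_tpow_tnorm2, pow_mult; reflexivity.
Qed.

Lemma Lp_norm_le d p f g :
  0 <= torus_int d (fun t => Cmod (tpoly_eval d f t) ^ p) ->
  torus_int d (fun t => Cmod (tpoly_eval d f t) ^ p) <=
  torus_int d (fun t => Cmod (tpoly_eval d g t) ^ p) ->
  Lp_norm d p f <= Lp_norm d p g.
Proof.
  unfold Lp_norm; cbv zeta; intros H0 Hle.
  destruct (Req_EM_T _ 0) as [_|Hf]; destruct (Req_EM_T _ 0) as [Hg|_].
  - lra.
  - left; apply exp_pos.
  - lra.
  - apply Rle_Rpower_l; [|lra].
    destruct p; [simpl; rewrite Rinv_0; lra|].
    left; apply Rinv_0_lt_compat, lt_0_INR; lia.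
Qed.

Lemma Lp_norm_lt d p f g : (0 < p)%nat ->
  0 <= torus_int d (fun t => Cmod (tpoly_eval d f t) ^ p) ->
  torus_int d (fun t => Cmod (tpoly_eval d f t) ^ p) <
  torus_int d (fun t => Cmod (tpoly_eval d g t) ^ p) ->
  Lp_norm d p f < Lp_norm d p g.
Proof.
  unfold Lp_norm; cbv zeta; intros Hp H0 Hlt.
  destruct (Req_EM_T _ 0) as [_|Hf]; destruct (Req_EM_T _ 0) as [Hg|_].
  - lra.
  - apply exp_pos.
  - lra.
  - apply Rlt_Rpower_l; [apply Rinv_0_lt_compat, lt_0_INR; lia|lra].
Qed.

Lemma pow_convex_lb n x y :
  0 <= x -> 0 <= y -> x ^ S n + INR (S n) * x ^ n * (y - x) <= y ^ S n.
Proof.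
  intros Hx Hy; induction n as [|n IH]; [simpl; lra|].
  assert (Hsq : 0 <= INR (S n) * x ^ n * (y - x) ^ 2).
  { apply Rmult_le_pos; [apply Rmult_le_pos; [apply pos_INR|apply pow_le; lra]|apply pow2_ge_0]. }
  apply Rmult_le_compat_l with (r := y) in IH; [|exact Hy].
  change (y ^ S (S n)) with (y * y ^ S n); rewrite !S_INR in *; cbn [pow] in *; lra.
Qed.

Lemma pow_taylor_ub n B : 0 <= B -> exists K, 0 <= K /\
  forall x u, 0 <= x <= B -> 0 <= x + u <= B ->
    (x + u) ^ S n <= x ^ S n + INR (S n) * x ^ n * u + K * u ^ 2.
Proof.
  intros HB; induction n as [|n [K [HK IH]]].
  - exists 0; split; [lra|]; intros x u _ _; simpl; lra.
  - exists (B * K + INR (S n) * B ^ n); split.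
    { apply Rplus_le_le_0_compat; [nra|].
      apply Rmult_le_pos; [apply pos_INR|apply pow_le; lra]. }
    intros x u Hx Hxu.
    specialize (IH x u Hx Hxu).
    apply Rmult_le_compat_l with (r := x + u) in IH; [|lra].
    assert (Hxn : x ^ n <= B ^ n) by (apply pow_incr; lra).
    assert (Hu2 : 0 <= u ^ 2) by apply pow2_ge_0.
    assert (HKu : (x + u) * (K * u ^ 2) <= B * (K * u ^ 2))
      by (apply Rmult_le_compat_r; [apply Rmult_le_pos|]; lra).
    assert (Hnu : INR (S n) * x ^ n * u ^ 2 <= INR (S n) * B ^ n * u ^ 2).
    { apply Rmult_le_compat_r; [exact Hu2|].
      apply Rmult_le_compat_l; [apply pos_INR|exact Hxn]. }
    change ((x + u) ^ S (S n)) with ((x + u) * (x + u) ^ S n).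
    rewrite !S_INR in *; cbn [pow] in *; lra.
Qed.

Lemma pow_perturb_ub n G : 0 <= G -> exists C, 0 <= C /\
  forall x s eps, 0 <= x <= G ^ 2 -> s ^ 2 <= x -> 0 <= eps <= 1 ->
    (x - 2 * eps * s + eps ^ 2) ^ S n <=
    x ^ S n - 2 * INR (S n) * eps * (x ^ n * s) + C * eps ^ 2.
Proof.
  intros HG.
  destruct (pow_taylor_ub n ((G + 1) ^ 2)) as [K [HK Htaylor]]; [apply pow2_ge_0|].
  exists (INR (S n) * ((G + 1) ^ 2) ^ n + K * (2 * G + 1) ^ 2); split.
  { apply Rplus_le_le_0_compat; apply Rmult_le_pos;
      try apply pow_le; try apply pos_INR; try apply pow2_ge_0; lra. }
  intros x s eps Hx Hs Heps.
  assert (Hs_abs : - G <= s <= G) by (simpl in *; nra).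
  set (u := eps * (eps - 2 * s)).
  assert (Hxu : 0 <= x + u <= (G + 1) ^ 2).
  { unfold u; simpl in *; split.
    - pose proof (Rle_0_sqr (eps - s)); unfold Rsqr in *; nra.
    - assert (0 <= eps * (s + G)) by (apply Rmult_le_pos; lra).
      assert (0 <= (1 - eps) * G) by (apply Rmult_le_pos; lra).
      nra. }
  assert (HxB : 0 <= x <= (G + 1) ^ 2) by (simpl in *; nra).
  specialize (Htaylor x u HxB Hxu).
  assert (Hxn : x ^ n <= ((G + 1) ^ 2) ^ n) by (apply pow_incr; exact HxB).
  assert (Hu2 : u ^ 2 <= eps ^ 2 * (2 * G + 1) ^ 2).
  { unfold u; rewrite Rpow_mult_distr; apply Rmult_le_compat_l; [apply pow2_ge_0|].
    simpl; nra. }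
  replace (x - 2 * eps * s + eps ^ 2) with (x + u) by (unfold u; ring).
  assert (HnB : INR (S n) * x ^ n * eps ^ 2 <= INR (S n) * ((G + 1) ^ 2) ^ n * eps ^ 2).
  { apply Rmult_le_compat_r; [apply pow2_ge_0|].
    apply Rmult_le_compat_l; [apply pos_INR|exact Hxn]. }
  assert (HKu : K * u ^ 2 <= K * (eps ^ 2 * (2 * G + 1) ^ 2)) by (apply Rmult_le_compat_l; lra).
  unfold u in *; lra.
Qed.

Lemma small_quadratic a C : 0 < a -> 0 <= C -> exists eps, 0 < eps <= 1 /\ C * eps ^ 2 < a * eps.
Proof.
  intros Ha HC; exists (Rmin 1 (a / (C + 1))); split.
  - split; [apply Rmin_glb_lt; [lra|apply Rdiv_lt_0_compat; lra]|apply Rmin_l].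
  - set (eps := Rmin 1 (a / (C + 1))).
    assert (Heps : 0 < eps) by (apply Rmin_glb_lt; [lra|apply Rdiv_lt_0_compat; lra]).
    assert (HepsC : eps * (C + 1) <= a).
    { apply Rle_trans with (a / (C + 1) * (C + 1)).
      - apply Rmult_le_compat_r; [lra|apply Rmin_r].
      - right; field; lra. }
    simpl; nra.
Qed.

Lemma Cmod_sqr z : Cmod z ^ 2 = Re z ^ 2 + Im z ^ 2.
Proof.
  unfold Cmod; rewrite pow2_sqrt; [reflexivity|].
  apply Rplus_le_le_0_compat; apply pow2_ge_0.
Qed.

Lemma Cmod_add_sqr z w : Cmod (z + w) ^ 2 = Cmod z ^ 2 + 2 * Re (Cconj z * w) + Cmod w ^ 2.
Proof. rewrite !Cmod_sqr; unfold Re, Im; simpl; ring. Qed.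

Lemma Cmod_add_pow_lb n z w :
  (Cmod z ^ 2) ^ S n + 2 * INR (S n) * ((Cmod z ^ 2) ^ n * Re (Cconj z * w)) <=
  (Cmod (z + w) ^ 2) ^ S n.
Proof.
  pose proof (pow_convex_lb n _ _ (pow2_ge_0 (Cmod z)) (pow2_ge_0 (Cmod (z + w)))) as H.
  rewrite Cmod_add_sqr in H |- *.
  assert (0 <= INR (S n) * (Cmod z ^ 2) ^ n * Cmod w ^ 2).
  { apply Rmult_le_pos; [apply Rmult_le_pos; [apply pos_INR|apply pow_le]|]; apply pow2_ge_0. }
  lra.
Qed.

Lemma Cmod_sub_pow_ub n G : 0 <= G -> exists C, 0 <= C /\
  forall z w eps, Cmod z <= G -> Cmod w = 1 -> 0 <= eps <= 1 ->
    (Cmod (z + RtoC (- eps) * w) ^ 2) ^ S n <=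
    (Cmod z ^ 2) ^ S n - 2 * INR (S n) * eps * ((Cmod z ^ 2) ^ n * Re (Cconj z * w))
    + C * eps ^ 2.
Proof.
  intros HG; destruct (pow_perturb_ub n G HG) as [C [HC Hub]].
  exists C; split; [exact HC|]; intros z w eps Hz Hw Heps.
  assert (Hs : Re (Cconj z * w) ^ 2 <= Cmod z ^ 2).
  { rewrite <- pow2_abs; apply pow_incr; split; [apply Rabs_pos|].
    eapply Rle_trans; [apply re_le_Cmod|].
    rewrite Cmod_mult, Cmod_conj, Hw, Rmult_1_r; apply Rle_refl. }
  assert (Hx : 0 <= Cmod z ^ 2 <= G ^ 2).
  { split; [apply pow2_ge_0|apply pow_incr; split; [apply Cmod_ge_0|exact Hz]]. }
  rewrite Cmod_add_sqr, Cmod_mult, Cmod_R, Hw, Rmult_1_r, pow2_abs.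
  replace (Re (Cconj z * (RtoC (- eps) * w))) with (- eps * Re (Cconj z * w))
    by (unfold Re; simpl; ring).
  replace (Cmod z ^ 2 + 2 * (- eps * Re (Cconj z * w)) + (- eps) ^ 2)
    with (Cmod z ^ 2 - 2 * eps * Re (Cconj z * w) + eps ^ 2) by ring.
  apply Hub; assumption.
Qed.

Definition lin_comb (l : list (mindex * Z)) (gam : mindex) (i : nat) : Z :=
  fold_right (fun p acc => (snd p * (fst p i - gam i) + acc)%Z) 0%Z l.

Definition sum_idx (s : list mindex) (i : nat) : Z :=
  fold_right (fun a acc => (a i + acc)%Z) 0%Z s.

(* [lam = gam + (x_1 + ... + x_n) - (y_1 + ... + y_n)] with all terms in [Gamma]: a
   representation of cost at most [n] with its coefficients unfolded into repeated terms
   and padded with copies of [gam]. *)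
Definition word_repr (Gamma : mindex -> Prop) (n : nat) (lam : mindex) : Prop :=
  exists gam xs ys, Gamma gam /\ List.Forall Gamma xs /\ List.Forall Gamma ys /\
    length xs = n /\ length ys = n /\
    forall i, lam i = (gam i + sum_idx xs i - sum_idx ys i)%Z.

Lemma lin_comb_cons a m l gam i :
  lin_comb ((a, m) :: l) gam i = (m * (a i - gam i) + lin_comb l gam i)%Z.
Proof. reflexivity. Qed.

Lemma pos_sum_cons a m l : pos_sum ((a, m) :: l) = (Z.max m 0 + pos_sum l)%Z.
Proof. reflexivity. Qed.

Lemma neg_sum_cons a m l : neg_sum ((a, m) :: l) = (Z.max (- m) 0 + neg_sum l)%Z.
Proof. reflexivity. Qed.

Lemma lin_comb_app l1 l2 gam i :
  lin_comb (l1 ++ l2) gam i = (lin_comb l1 gam i + lin_comb l2 gam i)%Z.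
Proof. induction l1 as [|[a m] l1 IH]; [simpl; lia|cbn [app]; rewrite !lin_comb_cons, IH; lia]. Qed.

Lemma pos_sum_app l1 l2 : pos_sum (l1 ++ l2) = (pos_sum l1 + pos_sum l2)%Z.
Proof. induction l1 as [|[a m] l1 IH]; [simpl; lia|cbn [app]; rewrite !pos_sum_cons, IH; lia]. Qed.

Lemma neg_sum_app l1 l2 : neg_sum (l1 ++ l2) = (neg_sum l1 + neg_sum l2)%Z.
Proof. induction l1 as [|[a m] l1 IH]; [simpl; lia|cbn [app]; rewrite !neg_sum_cons, IH; lia]. Qed.

Lemma sum_idx_cons a s i : sum_idx (a :: s) i = (a i + sum_idx s i)%Z.
Proof. reflexivity. Qed.

Lemma sum_idx_app s1 s2 i : sum_idx (s1 ++ s2) i = (sum_idx s1 i + sum_idx s2 i)%Z.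
Proof. induction s1 as [|a s1 IH]; [simpl; lia|cbn [app]; rewrite !sum_idx_cons, IH; lia]. Qed.

Lemma sum_idx_repeat a k i : sum_idx (repeat a k) i = (Z.of_nat k * a i)%Z.
Proof. induction k as [|k IH]; [simpl; lia|cbn [repeat]; rewrite sum_idx_cons, IH; lia]. Qed.

Lemma sum_idx_vanish s i : (forall a, In a s -> a i = 0%Z) -> sum_idx s i = 0%Z.
Proof.
  induction s as [|a s IH]; intros H; [reflexivity|].
  rewrite sum_idx_cons, (H a (or_introl eq_refl)), IH; [reflexivity|].
  intros b Hb; apply H; right; exact Hb.
Qed.

Lemma lin_comb_const_coef s m gam i :
  lin_comb (map (fun a => (a, m)) s) gam i = (m * (sum_idx s i - Z.of_nat (length s) * gam i))%Z.
Proof.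
  induction s as [|a s IH]; [simpl; lia|].
  cbn [map length]; rewrite lin_comb_cons, sum_idx_cons, IH; lia.
Qed.

Lemma pos_sum_const_coef s m :
  pos_sum (map (fun a => (a, m)) s) = (Z.of_nat (length s) * Z.max m 0)%Z.
Proof. induction s as [|a s IH]; [simpl; lia|cbn [map length]; rewrite pos_sum_cons, IH; lia]. Qed.

Lemma neg_sum_const_coef s m :
  neg_sum (map (fun a => (a, m)) s) = (Z.of_nat (length s) * Z.max (- m) 0)%Z.
Proof. induction s as [|a s IH]; [simpl; lia|cbn [map length]; rewrite neg_sum_cons, IH; lia]. Qed.

Lemma repr_normalize (Gamma : mindex -> Prop) gam l :
  List.Forall (fun p => Gamma (fst p)) l ->
  exists l', List.Forall (fun p => Gamma (fst p) /\ fst p <> gam) l' /\ NoDup (map fst l') /\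
    (forall i, lin_comb l' gam i = lin_comb l gam i) /\
    (pos_sum l' <= pos_sum l)%Z /\ (neg_sum l' <= neg_sum l)%Z.
Proof.
  induction l as [|[a m] l IH]; intros Hl.
  - exists nil; split; [constructor|split; [constructor|split; [reflexivity|lia]]].
  - inversion Hl as [|? ? Ha Hl']; subst; cbn [fst] in Ha.
    destruct (IH Hl') as [l' [HΓ [Hnd [Hlin [Hpos Hneg]]]]].
    destruct (excluded_middle_informative (a = gam)) as [->|Hne].
    { exists l'; repeat split; auto;
        [intros i; rewrite Hlin, lin_comb_cons|rewrite pos_sum_cons|rewrite neg_sum_cons]; lia. }
    destruct (excluded_middle_informative (In a (map fst l'))) as [Hin|Hnin].
    + apply in_map_iff in Hin; destruct Hin as [[a' m'] [Ea Hin]]; cbn [fst] in Ea; subst a'.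
      apply in_split in Hin; destruct Hin as [l1 [l2 ->]].
      exists (l1 ++ (a, (m + m')%Z) :: l2); rewrite map_app in *; repeat split.
      * apply Forall_app in HΓ; destruct HΓ as [HΓ1 HΓ2]; inversion HΓ2; subst.
        apply Forall_app; split; [|constructor]; auto.
      * exact Hnd.
      * intros i; rewrite lin_comb_cons, <- Hlin, !lin_comb_app, !lin_comb_cons; lia.
      * rewrite pos_sum_cons; rewrite !pos_sum_app, !pos_sum_cons in *; lia.
      * rewrite neg_sum_cons; rewrite !neg_sum_app, !neg_sum_cons in *; lia.
    + exists ((a, m) :: l'); repeat split.
      * constructor; auto.
      * constructor; auto.
      * intros i; rewrite !lin_comb_cons, Hlin; lia.
      * rewrite !pos_sum_cons; lia.
      * rewrite !neg_sum_cons; lia.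
Qed.

Lemma lin_comb_expand gam l : exists P N,
  incl P (map fst l) /\ incl N (map fst l) /\
  Z.of_nat (length P) = pos_sum l /\ Z.of_nat (length N) = neg_sum l /\
  forall i, lin_comb l gam i =
    (sum_idx P i - sum_idx N i - (Z.of_nat (length P) - Z.of_nat (length N)) * gam i)%Z.
Proof.
  induction l as [|[a m] l [P [N [HP [HN [LP [LN Hlin]]]]]]].
  - exists nil, nil; repeat split; try (intros x []); reflexivity.
  - rewrite pos_sum_cons, neg_sum_cons; cbn [map fst].
    destruct (Z_le_gt_dec 0 m) as [Hm|Hm].
    + exists (repeat a (Z.to_nat m) ++ P), N; repeat split.
      * apply incl_app; [intros x Hx; apply repeat_spec in Hx; left; auto|apply incl_tl, HP].
      * apply incl_tl, HN.
      * rewrite length_app, repeat_length; lia.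
      * lia.
      * intros i; rewrite lin_comb_cons, Hlin, sum_idx_app, sum_idx_repeat, length_app,
          repeat_length, Nat2Z.inj_add, Z2Nat.id by lia; ring.
    + exists P, (repeat a (Z.to_nat (- m)) ++ N); repeat split.
      * apply incl_tl, HP.
      * apply incl_app; [intros x Hx; apply repeat_spec in Hx; left; auto|apply incl_tl, HN].
      * lia.
      * rewrite length_app, repeat_length; lia.
      * intros i; rewrite lin_comb_cons, Hlin, sum_idx_app, sum_idx_repeat, length_app,
          repeat_length, Nat2Z.inj_add, Z2Nat.id by lia; ring.
Qed.

Lemma word_repr_of_dist_le Gamma lam n : dist_le Gamma lam n -> word_repr Gamma n lam.
Proof.
  intros [gam [l [[Hgam [Hl [_ Hlam]]] Hcost]]].
  destruct (lin_comb_expand gam l) as [P [N [HP [HN [LP [LN Hlin]]]]]].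
  assert (HlΓ : List.Forall Gamma (map fst l)).
  { apply Forall_map; eapply Forall_impl; [|exact Hl]; intros p [Hp _]; exact Hp. }
  assert (Hrep : List.Forall Gamma (repeat gam (n - length P)) /\
                 List.Forall Gamma (repeat gam (n - length N))).
  { split; apply Forall_forall; intros x Hx; apply repeat_spec in Hx; subst; exact Hgam. }
  exists gam, (P ++ repeat gam (n - length P)), (N ++ repeat gam (n - length N)).
  repeat split.
  - exact Hgam.
  - apply Forall_app; split; [exact (incl_Forall HP HlΓ)|apply Hrep].
  - apply Forall_app; split; [exact (incl_Forall HN HlΓ)|apply Hrep].
  - rewrite length_app, repeat_length; lia.
  - rewrite length_app, repeat_length; lia.
  - intros i; rewrite Hlam; fold (lin_comb l gam i).
    rewrite Hlin, !sum_idx_app, !sum_idx_repeat, !Nat2Z.inj_sub by lia; ring.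
Qed.

Lemma dist_le_of_word_repr Gamma lam n : word_repr Gamma n lam -> dist_le Gamma lam n.
Proof.
  intros [gam [xs [ys [Hgam [Hxs [Hys [Lx [Ly Hlam]]]]]]]].
  set (l := map (fun a => (a, 1%Z)) xs ++ map (fun a => (a, (-1)%Z)) ys).
  assert (Hl : List.Forall (fun p => Gamma (fst p)) l).
  { apply Forall_app; split; apply Forall_map; assumption. }
  destruct (repr_normalize Gamma gam l Hl) as [l' [HΓ [Hnd [Hlin [Hpos Hneg]]]]].
  exists gam, l'; split; [repeat split; auto|].
  - intros i; fold (lin_comb l' gam i).
    rewrite Hlin, Hlam; unfold l.
    rewrite lin_comb_app, !lin_comb_const_coef, Lx, Ly; ring.
  - unfold l in Hpos, Hneg.
    rewrite pos_sum_app, !pos_sum_const_coef in Hpos.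
    rewrite neg_sum_app, !neg_sum_const_coef in Hneg.
    rewrite Lx, Ly in *; lia.
Qed.

Lemma E_ext_of_word_repr d n Gamma lam :
  in_N0d d lam -> word_repr Gamma n lam -> E_ext d n Gamma lam.
Proof.
  intros HN Hw; pose proof (dist_le_of_word_repr _ _ _ Hw) as Hd.
  split; [|split; [exact HN|exact Hd]].
  destruct Hd as [gam [l [Hr _]]]; exists gam, l; exact Hr.
Qed.

Lemma E_ext_of_Gamma d n (Gamma : mindex -> Prop) lam :
  (forall a, Gamma a -> in_N0d d a) -> Gamma lam -> E_ext d n Gamma lam.
Proof.
  intros HG Hlam.
  assert (Hr : is_repr Gamma lam lam nil)
    by (split; [exact Hlam|split; [constructor|split; [constructor|intros i; simpl; lia]]]).
  split; [exists lam, nil; exact Hr|split; [apply HG, Hlam|]].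
  exists lam, nil; split; [exact Hr|simpl; lia].
Qed.

Lemma In_tmul p F G : In p (tmul F G) ->
  exists p1 p2, In p1 F /\ In p2 G /\ p = (add_idx (fst p1) (fst p2), (snd p1 * snd p2)%C).
Proof.
  unfold tmul; intros H; apply in_flat_map in H; destruct H as [p1 [H1 H2]].
  apply in_map_iff in H2; destruct H2 as [p2 [E H2]]; exists p1, p2; auto.
Qed.

Lemma tmul_In p1 p2 F G : In p1 F -> In p2 G ->
  In (add_idx (fst p1) (fst p2), (snd p1 * snd p2)%C) (tmul F G).
Proof.
  intros H1 H2; unfold tmul; apply in_flat_map; exists p1; split; auto.
  apply in_map_iff; exists p2; auto.
Qed.

Lemma In_tconj p F : In p (tconj F) -> exists q, In q F /\ p = (opp_idx (fst q), Cconj (snd q)).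
Proof. unfold tconj; intros H; apply in_map_iff in H; destruct H as [q [E H]]; exists q; auto. Qed.

Lemma tconj_In q F : In q F -> In (opp_idx (fst q), Cconj (snd q)) (tconj F).
Proof. intros H; unfold tconj; apply in_map_iff; exists q; auto. Qed.

Lemma In_tpow_tnorm2 g n p : In p (tpow (tnorm2 g) n) ->
  exists xs ys, length xs = n /\ length ys = n /\
    incl xs (map fst g) /\ incl ys (map fst g) /\
    forall i, fst p i = (sum_idx xs i - sum_idx ys i)%Z.
Proof.
  revert p; induction n as [|n IH]; intros p Hp; cbn [tpow] in Hp.
  - destruct Hp as [<-|[]]; exists nil, nil; repeat split; try (intros x []); reflexivity.
  - apply In_tmul in Hp; destruct Hp as [p1 [p2 [H1 [H2 ->]]]].
    apply In_tmul in H1; destruct H1 as [x [y' [Hx [Hy' ->]]]].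
    apply In_tconj in Hy'; destruct Hy' as [y [Hy ->]].
    destruct (IH p2 H2) as [xs [ys [Lx [Ly [Hxs [Hys Hp2]]]]]].
    exists (fst x :: xs), (fst y :: ys); repeat split; cbn [length]; try lia.
    + apply incl_cons; [apply in_map; exact Hx|exact Hxs].
    + apply incl_cons; [apply in_map; exact Hy|exact Hys].
    + intros i; cbn [fst]; unfold add_idx, opp_idx; rewrite Hp2, !sum_idx_cons; lia.
Qed.

Lemma tpow_tnorm2_In g xs ys : length xs = length ys ->
  incl xs (map fst g) -> incl ys (map fst g) ->
  exists p, In p (tpow (tnorm2 g) (length xs)) /\
    forall i, fst p i = (sum_idx xs i - sum_idx ys i)%Z.
Proof.
  revert ys; induction xs as [|x xs IH]; intros [|y ys] Hlen Hxs Hys; try discriminate.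
  - exists (zero_idx, RtoC 1); split; [left; reflexivity|reflexivity].
  - apply incl_cons_inv in Hxs; destruct Hxs as [Hx Hxs].
    apply incl_cons_inv in Hys; destruct Hys as [Hy Hys].
    destruct (IH ys ltac:(simpl in Hlen; lia) Hxs Hys) as [p [Hp Hpi]].
    apply in_map_iff in Hx; destruct Hx as [qx [<- Hqx]].
    apply in_map_iff in Hy; destruct Hy as [qy [<- Hqy]].
    eexists; split.
    + cbn [length tpow]; apply tmul_In; [apply tmul_In; [exact Hqx|apply tconj_In, Hqy]|exact Hp].
    + intros i; cbn [fst]; unfold add_idx, opp_idx; rewrite Hpi, !sum_idx_cons; lia.
Qed.

Definition cross_term (n : nat) (g h : tpoly) : tpoly :=
  tmul (tpow (tnorm2 g) n) (tmul (tconj g) h).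

Lemma Re_eval_cross_term d n g h t :
  Re (tpoly_eval d (cross_term n g h) t) =
  (Cmod (tpoly_eval d g t) ^ 2) ^ n * Re (Cconj (tpoly_eval d g t) * tpoly_eval d h t).
Proof.
  unfold cross_term; rewrite eval_tmul, eval_tpow_tnorm2, eval_tmul, eval_tconj.
  unfold Re; simpl; ring.
Qed.

Lemma In_cross_term n g h p : In p (cross_term n g h) ->
  exists y xs ys mu, In y (map fst g) /\ incl xs (map fst g) /\ incl ys (map fst g) /\
    In mu (map fst h) /\ length xs = n /\ length ys = n /\
    forall i, fst p i = (sum_idx xs i - sum_idx ys i - y i + mu i)%Z.
Proof.
  intros Hp; apply In_tmul in Hp; destruct Hp as [p1 [p2 [H1 [H2 ->]]]].
  apply In_tmul in H2; destruct H2 as [y' [mu [Hy' [Hmu ->]]]].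
  apply In_tconj in Hy'; destruct Hy' as [y [Hy ->]].
  destruct (In_tpow_tnorm2 g n p1 H1) as [xs [ys [Lx [Ly [Hxs [Hys Hp1]]]]]].
  exists (fst y), xs, ys, (fst mu); repeat split; try apply in_map; try assumption.
  intros i; cbn [fst]; unfold add_idx, opp_idx; rewrite Hp1; lia.
Qed.

Lemma unit_coefs_tmul F G : unit_coefs F -> unit_coefs G -> unit_coefs (tmul F G).
Proof.
  intros HF HG p Hp; apply In_tmul in Hp; destruct Hp as [p1 [p2 [H1 [H2 ->]]]]; cbn [snd].
  rewrite (HF p1 H1), (HG p2 H2); ring.
Qed.

Lemma unit_coefs_tconj F : unit_coefs F -> unit_coefs (tconj F).
Proof.
  intros HF p Hp; apply In_tconj in Hp; destruct Hp as [q [H ->]]; cbn [snd].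
  rewrite (HF q H); apply injective_projections; simpl; ring.
Qed.

Lemma unit_coefs_tpow F m : unit_coefs F -> unit_coefs (tpow F m).
Proof.
  intros HF; induction m as [|m IH]; cbn [tpow].
  - intros p [<-|[]]; reflexivity.
  - apply unit_coefs_tmul; assumption.
Qed.

Lemma unit_coefs_unit_poly s : unit_coefs (unit_poly s).
Proof. intros p Hp; apply in_map_iff in Hp; destruct Hp as [a [<- _]]; reflexivity. Qed.

Lemma re_const_term_cross_term_eq0 d n (Gamma : mindex -> Prop) g h :
  (forall a, Gamma a -> in_N0d d a) ->
  (forall lam, E_ext d n Gamma lam -> Gamma lam) ->
  List.Forall Gamma (map fst g) ->
  List.Forall (fun a => in_N0d d a /\ ~ Gamma a) (map fst h) ->
  re_const_term d (cross_term n g h) = 0.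
Proof.
  intros HG HE Hg Hh; rewrite Forall_forall in Hg, Hh.
  apply re_const_term_eq0; intros p Hp Hnull.
  destruct (In_cross_term n g h p Hp) as [y [xs [ys [mu [Hy [Hxs [Hys [Hmu [Lx [Ly Hpi]]]]]]]]]].
  destruct (Hh mu Hmu) as [[Hmu_out Hmu_nn] Hmu_notin]; apply Hmu_notin, HE.
  apply E_ext_of_word_repr; [split; assumption|].
  exists y, ys, xs; repeat split; try apply Hg; auto;
    try (apply Forall_forall; intros a Ha; apply Hg; auto).
  intros i; destruct (Nat.lt_ge_cases i d) as [Hi|Hi].
  - specialize (Hnull i Hi); rewrite Hpi in Hnull; lia.
  - assert (Hout : forall a, In a (map fst g) -> a i = 0%Z)
      by (intros a Ha; apply (HG a (Hg a Ha)), Hi).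
    rewrite Hmu_out, Hout, !sum_idx_vanish by auto; auto.
Qed.

Lemma re_const_term_cross_term_ge1 d n gam xs ys lam :
  length xs = n -> length ys = n ->
  (forall i, lam i = (gam i + sum_idx xs i - sum_idx ys i)%Z) ->
  1 <= re_const_term d (cross_term n (unit_poly (gam :: xs ++ ys)) (unit_poly (lam :: nil))).
Proof.
  intros Lx Ly Hlam; apply re_const_term_ge1.
  { apply unit_coefs_tmul; [apply unit_coefs_tpow, unit_coefs_tmul|apply unit_coefs_tmul];
      auto using unit_coefs_tconj, unit_coefs_unit_poly. }
  set (g := unit_poly (gam :: xs ++ ys)).
  assert (Hidx : map fst g = gam :: xs ++ ys)
    by (unfold g, unit_poly; rewrite map_map; apply map_id).
  destruct (tpow_tnorm2_In g ys xs) as [p [Hp Hpi]]; [lia| | |].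
  1, 2: rewrite Hidx; apply incl_tl; auto using incl_appl, incl_appr, incl_refl.
  rewrite Ly in Hp.
  eexists; split.
  - apply tmul_In; [exact Hp|].
    apply tmul_In; [apply tconj_In; left; reflexivity|left; reflexivity].
  - intros i _; cbn [fst]; unfold add_idx, opp_idx; rewrite Hpi, Hlam; lia.
Qed.

Lemma re_const_term_tpow_tnorm2_ge0 d f m : 0 <= re_const_term d (tpow (tnorm2 f) m).
Proof.
  apply re_const_term_ge0; intros t; rewrite Re_eval_tpow_tnorm2; apply pow_le, pow2_ge_0.
Qed.

Lemma re_const_term_perturb_ub d n s lam : exists C, 0 <= C /\
  forall eps, 0 <= eps <= 1 ->
    re_const_term d (tpow (tnorm2 (unit_poly s ++ (lam, RtoC (- eps)) :: nil)) (S n)) <=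
    re_const_term d (tpow (tnorm2 (unit_poly s)) (S n))
    - 2 * INR (S n) * eps * re_const_term d (cross_term n (unit_poly s) (unit_poly (lam :: nil)))
    + C * eps ^ 2.
Proof.
  destruct (Cmod_sub_pow_ub n (INR (length s)) (pos_INR _)) as [C [HC0 Hub]].
  exists C; split; [exact HC0|]; intros eps Heps.
  enough (H : re_const_term d (tpow (tnorm2 (unit_poly s ++ (lam, RtoC (- eps)) :: nil)) (S n)) <=
    re_const_term d (tpow (tnorm2 (unit_poly s)) (S n) ++
      tscale (RtoC (- (2 * INR (S n) * eps))) (cross_term n (unit_poly s) (unit_poly (lam :: nil)))
      ++ tscale (RtoC (C * eps ^ 2)) tone))
    by (rewrite !re_const_term_app, !re_const_term_tscale, re_const_term_tone in H; lra).
  apply re_const_term_le; intros t.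
  rewrite !eval_app, !re_plus, !eval_tscale, !re_scal_l, eval_tone, re_RtoC,
    Re_eval_cross_term, !Re_eval_tpow_tnorm2, eval_app.
  replace (tpoly_eval d (unit_poly (lam :: nil)) t) with (monomial d lam t)
    by (cbn [unit_poly map]; rewrite eval_cons, eval_nil; cbn [fst snd]; ring).
  replace (tpoly_eval d ((lam, RtoC (- eps)) :: nil) t) with (RtoC (- eps) * monomial d lam t)%C
    by (rewrite eval_cons, eval_nil; cbn [fst snd]; ring).
  eapply Rle_trans;
    [apply (Hub _ _ eps (Cmod_eval_unit_poly d t s) (Cmod_monomial d lam t) Heps)|right; ring].
Qed.

Lemma P_Gamma_app_notin (Gamma : mindex -> Prop) g lam c :
  List.Forall Gamma (map fst g) -> ~ Gamma lam -> P_Gamma Gamma (g ++ (lam, c) :: nil) = g.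
Proof.
  intros Hg Hlam; unfold P_Gamma; rewrite filter_app; cbn [filter fst].
  destruct (excluded_middle_informative (Gamma lam)); [contradiction|].
  rewrite app_nil_r; transitivity (filter (fun _ => true) g); [|apply List.filter_true].
  apply filter_ext_in; intros p Hp.
  destruct (excluded_middle_informative (Gamma (fst p))) as [_|Hp_notin]; [reflexivity|].
  exfalso; apply Hp_notin, (proj1 (Forall_forall _ _) Hg), in_map, Hp.
Qed.

Lemma contractive_of_E_ext_sub d n (Gamma : mindex -> Prop) :
  (forall a, Gamma a -> in_N0d d a) -> (forall lam, E_ext d n Gamma lam -> Gamma lam) ->
  contractive_projection_set d (2 * (n + 1)) Gamma.
Proof.
  intros HG HE f Hf; replace (n + 1)%nat with (S n) by lia.
  set (inG := fun p : mindex * C =>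
                if excluded_middle_informative (Gamma (fst p)) then true else false).
  set (g := P_Gamma Gamma f); set (h := filter (fun p => negb (inG p)) f).
  assert (Hcross : re_const_term d (cross_term n g h) = 0).
  { apply (re_const_term_cross_term_eq0 d n Gamma g h HG HE);
      apply Forall_map, Forall_forall; intros p Hp; apply filter_In in Hp; destruct Hp as [Hp Hin];
      unfold inG in Hin; destruct (excluded_middle_informative _); try discriminate; auto.
    split; [exact (proj1 (Forall_forall _ f) Hf p Hp)|assumption]. }
  apply Lp_norm_le; rewrite !torus_int_Cmod_pow_even; [apply re_const_term_tpow_tnorm2_ge0|].
  enough (H : re_const_term d (tpow (tnorm2 g) (S n) ++
                tscale (RtoC (2 * INR (S n))) (cross_term n g h))
              <= re_const_term d (tpow (tnorm2 f) (S n)))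
    by (rewrite re_const_term_app, re_const_term_tscale, Hcross in H; lra).
  apply re_const_term_le; intros t.
  rewrite eval_app, re_plus, eval_tscale, re_scal_l, Re_eval_cross_term, !Re_eval_tpow_tnorm2.
  rewrite (eval_filter_split d t inG f); change (filter inG f) with g; fold h.
  apply Cmod_add_pow_lb.
Qed.

Lemma E_ext_sub_of_contractive d n (Gamma : mindex -> Prop) :
  (forall a, Gamma a -> in_N0d d a) -> contractive_projection_set d (2 * (n + 1)) Gamma ->
  forall lam, E_ext d n Gamma lam -> Gamma lam.
Proof.
  intros HG HC lam [_ [Hlam Hdist]].
  destruct (classic (Gamma lam)) as [|Hnotin]; [assumption|exfalso].
  destruct (word_repr_of_dist_le _ _ _ Hdist)
    as [gam [xs [ys [Hgam [Hxs [Hys [Lx [Ly Hlam_eq]]]]]]]].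
  pose proof (re_const_term_cross_term_ge1 d n gam xs ys lam Lx Ly Hlam_eq) as Hcross.
  assert (Hs : List.Forall Gamma (map fst (unit_poly (gam :: xs ++ ys)))).
  { unfold unit_poly; rewrite map_map; cbn [fst]; rewrite map_id.
    constructor; [|apply Forall_app]; auto. }
  destruct (re_const_term_perturb_ub d n (gam :: xs ++ ys) lam) as [C [HC0 Hub]].
  destruct (small_quadratic (2 * INR (S n)) C) as [eps [Heps Hsmall]];
    [rewrite S_INR; pose proof (pos_INR n); lra|exact HC0|].
  set (f := unit_poly (gam :: xs ++ ys) ++ (lam, RtoC (- eps)) :: nil).
  assert (Hf : analytic_poly d f).
  { apply Forall_app; split; [|constructor; [exact Hlam|constructor]].
    apply Forall_forall; intros p Hp; apply HG, (proj1 (Forall_forall _ _) Hs), in_map, Hp. }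
  specialize (HC f Hf); unfold f in HC; rewrite (P_Gamma_app_notin _ _ _ _ Hs Hnotin) in HC.
  revert HC; apply Rlt_not_le; replace (n + 1)%nat with (S n) by lia.
  apply Lp_norm_lt; [lia| |]; rewrite !torus_int_Cmod_pow_even;
    [apply re_const_term_tpow_tnorm2_ge0|].
  specialize (Hub eps (conj (Rlt_le _ _ (proj1 Heps)) (proj2 Heps))).
  assert (Hgain : 2 * INR (S n) * eps * 1 <= 2 * INR (S n) * eps *
     re_const_term d (cross_term n (unit_poly (gam :: xs ++ ys)) (unit_poly (lam :: nil))))
    by (apply Rmult_le_compat_l; [pose proof (pos_INR (S n)); nra|exact Hcross]).
  lra.
Qed.

Theorem theorem1p3 (d n : nat) (Gamma : mindex -> Prop) :
  (1 <= d)%nat ->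
  (forall a, Gamma a -> in_N0d d a) ->
  (exists a, Gamma a) ->
  (contractive_projection_set d (2 * (n + 1)) Gamma <->
   (forall lam, E_ext d n Gamma lam <-> Gamma lam)).
Proof.
  intros _ HG _; split.
  - intros HC lam; split.
    + apply (E_ext_sub_of_contractive d n Gamma HG HC).
    + apply (E_ext_of_Gamma d n Gamma lam HG).
  - intros HE; apply (contractive_of_E_ext_sub d n Gamma HG); intros lam; apply HE.
Qed.
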